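(* Let $n\ge1$, $\mathbf{A}=\{a_1,\dots,a_n\}$ and $\mathbf{S}_1^n=\{XX : X\in\mathbf{A}^*,\ X\neq\emptyset\}$. Let $X_1=a_1$, $X_i=X_{i-1}a_iX_{i-1}$ for $2\le i\le n$. Then every minimal crucial word with respect to $\mathbf{S}_1^n$ is obtained from $X_n$ by a permutation of the letters of $\mathbf{A}$; i.e. $X_n$ is the unique minimal crucial word up to renaming of letters.
   Context: A word over $\mathbf{A}$ is a finite sequence of letters; $\mathbf{A}^*$ is the set of all words. A subword is a block of consecutive letters. For $\mathbf{S}\subseteq\mathbf{A}^*$, a word is free from $\mathbf{S}$ if none of its subwords belongs to $\mathbf{S}$. A word $X$ free from $\mathbf{S}$ is crucial with respect to $\mathbf{S}$ if for every letter $a\in\mathbf{A}$ the word $Xa$ contains a subword belonging to $\mathbf{S}$. A minimal crucial word is a crucial word of smallest possible length. *)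

From mathcomp Require Import all_boot all_fingroup.
Set Implicit Arguments. Unset Strict Implicit. Unset Printing Implicit Defensive.

(* Words over a finite alphabet T are sequences [seq T]; a subword is a
   contiguous block, i.e. [infix]. *)

Definition is_square {T : eqType} (w : seq T) : Prop :=
  exists x : seq T, x <> [::] /\ w = x ++ x.

Definition free_from {T : eqType} (S : seq T -> Prop) (w : seq T) : Prop :=
  forall u : seq T, infix u w -> ~ S u.

Definition crucial {T : finType} (S : seq T -> Prop) (w : seq T) : Prop :=
  free_from S w /\ forall a : T, exists u : seq T, infix u (rcons w a) /\ S u.

Definition minimal_crucial {T : finType} (S : seq T -> Prop) (w : seq T) : Prop :=
  crucial S w /\ forall v : seq T, crucial S v -> size w <= size v.

(* Zimin-type words with letters coded by naturals: letter a_i is coded by i-1.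
   zimin_nat 0 = [:: 0]  (= X_1),  zimin_nat k.+1 = X ++ k.+1 :: X  (= X_{k+2}). *)
Fixpoint zimin_nat (k : nat) : seq nat :=
  match k with
  | 0 => [:: 0]
  | k'.+1 => zimin_nat k' ++ k'.+1 :: zimin_nat k'
  end.

(* X_n as a word over the alphabet 'I_n (all codes are < n when n >= 1). *)
Definition zimin (n : nat) : seq 'I_n := pmap insub (zimin_nat n.-1).

From mathcomp Require Import all_boot all_fingroup.
From mathcomp Require Import zify.
Set Implicit Arguments. Unset Strict Implicit. Unset Printing Implicit Defensive.

(* Since W is crucial, for every letter a the word W a ends with a square, i.e. W ends with
   x a x for some x; let l(a) = |x|.  Two such suffixes x a x and y b y with
   |x| < |y| <= 2|x| overlap into a square inside W, so the l(a) are pairwise distinct and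
   each one more than doubles the previous.  The letter of rank k therefore has
   l >= 2^k - 1, whence |W| >= 2 l + 1 >= 2^n - 1 = |X_n|.  Minimality forces equality
   everywhere, and the square suffixes of lengths 2^k - 1 are then nested exactly as in
   the recursion X_{k+1} = X_k a_{k+1} X_k. *)

Section SquareFreeWords.

Variable T : eqType.
Implicit Types (u v w x y : seq T) (a b c : T).

Lemma suffix_suffix_size u v w :
  suffix u w -> suffix v w -> size u <= size v -> suffix u v.
Proof.
move=> su sv le_uv; have le_vw := size_suffix sv.
move: su sv; rewrite !suffixE => /eqP def_u /eqP def_v.
rewrite -[X in drop _ X]def_v drop_drop -{2}def_u.
by have -> : size v - size u + (size w - size v) = size w - size u by lia.
Qed.

Lemma suffix_size_inj u v w : suffix u w -> suffix v w -> size u = size v -> u = v.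
Proof.
move=> su sv eq_uv; have := suffix_suffix_size su sv (eq_leq eq_uv).
by rewrite suffixE eq_uv subnn drop0 => /eqP.
Qed.

Lemma overlapping_square_suffixes w x y a b :
  suffix (x ++ a :: x) w -> suffix (y ++ b :: y) w ->
  size x < size y <= 2 * size x -> ~ free_from is_square w.
Proof.
move=> sx sy /andP[lt_xy le_yx] w_free.
(* y = z a x and x = r b z, so w contains (b z)(b z). *)
have [z def_y] : exists z, y = z ++ a :: x.
  apply/suffixP/(@suffix_suffix_size _ _ (y ++ b :: y)) => //.
  - by apply: suffix_suffix_size (catl_suffix sx) sy _; rewrite size_cat /=; lia.
  - by rewrite -cat_rcons suffix_suffix.
have [r def_x] : exists r, x = r ++ b :: z.
  apply/suffixP/(@suffix_suffix_size _ _ (y ++ b :: z)).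
  - exact: suffix_suffix.
  - have : suffix (x ++ a :: x) ((y ++ b :: z) ++ a :: x).
      rewrite -catA /= -def_y; apply: suffix_suffix_size sx sy _.
      by rewrite !size_cat /=; lia.
    by rewrite suffix_catl // => /andP[].
  - by move: le_yx; rewrite def_y size_cat /=; lia.
case/suffixP: sy => q def_w.
apply: (w_free ((b :: z) ++ (b :: z))); last by exists (b :: z).
apply/infixP; exists (q ++ z ++ a :: r), (a :: x).
by rewrite def_w def_y {1}def_x -!catA /= -catA.
Qed.

Lemma cat_cons_fresh_inj x y x' y' c : c \notin x -> c \notin y ->
  x ++ c :: y = x' ++ c :: y' -> x = x' /\ y = y'.
Proof.
move=> cx cy eq_w.
have cx' : c \notin x'.
  apply/count_memPn; have := congr1 (count_mem c) eq_w.
  rewrite !count_cat /= eqxx (count_memPn cx) (count_memPn cy); lia.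
have := congr1 (index c) eq_w.
rewrite !index_cat (negbTE cx) (negbTE cx') /= eqxx !addn0 => eq_size.
by move/eqP: eq_w; rewrite eqseq_cat // => /andP[/eqP -> /eqP[->]].
Qed.

Lemma infix_cat_cons_fresh v x y c : c \notin x -> c \notin y -> c \notin v ->
  infix v (x ++ c :: y) -> infix v x \/ infix v y.
Proof.
move=> cx cy cv /infixP[p [q eq_w]].
have : c \in p ++ v ++ q by rewrite -eq_w mem_cat inE eqxx orbT.
rewrite !mem_cat (negbTE cv) /= => /orP[cp | cq].
  case/splitPr: cp eq_w => p1 p2; rewrite -catA /=.
  move=> /(cat_cons_fresh_inj cx cy)[_ ->].
  by right; apply/infixP; exists p2, q.
case/splitPr: cq eq_w => q1 q2; rewrite !catA.
move=> /(cat_cons_fresh_inj cx cy)[-> _].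
by left; apply/infixP; exists p, q1; rewrite !catA.
Qed.

Lemma square_free_cat_fresh x c : c \notin x -> free_from is_square x ->
  free_from is_square (x ++ c :: x).
Proof.
move=> cx x_free w uu_inf [u [u_nz def_w]]; subst w.
have [cu | cu] := boolP (c \in u).
  case/infixP: uu_inf => p [q /(congr1 (count_mem c))].
  rewrite !count_cat /= eqxx (count_memPn cx).
  have : 0 < count_mem c u by rewrite -has_count has_pred1.
  lia.
have cuu : c \notin u ++ u by rewrite mem_cat negb_or cu.
by case: (infix_cat_cons_fresh cx cx cuu uu_inf) => /x_free; apply; exists u.
Qed.

End SquareFreeWords.

Lemma crucial_squareP (T : finType) (w : seq T) :
  crucial is_square w <->
  free_from is_square w /\ forall a, exists x, suffix (x ++ a :: x) w.
Proof.
split=> -[w_free sq_w]; split=> // a.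
  have [u [inf_u [x [x_nz def_u]]]] := sq_w a.
  move: inf_u; rewrite infix_rconsl => /orP[/suffixP[p def_wa] | inf_u]; last first.
    by case: (w_free u inf_u); exists x.
  case/lastP: x x_nz def_u def_wa => // y b _ -> def_wa.
  move: def_wa; rewrite -rcons_cat -rcons_cat => /rcons_inj[-> <-].
  by exists y; rewrite cat_rcons suffix_suffix.
have [x /suffixP[p ->]] := sq_w a.
exists (rcons x a ++ rcons x a); split; last first.
  by exists (rcons x a); split=> // /(congr1 size); rewrite size_rcons.
by apply/infixP; exists p, [::]; rewrite cats0 !rcons_cat cat_rcons.
Qed.

Lemma zimin_nat_le k : all (leq^~ k) (zimin_nat k).
Proof.
elim: k => [//|k IHk] /=; rewrite all_cat /= leqnn /=.
by apply/andP; split; apply: sub_all IHk => i /= le_ik; apply: leqW.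
Qed.

Lemma size_zimin_nat k : (size (zimin_nat k)).+1 = 2 ^ k.+1.
Proof. by elim: k => [//|k IHk] /=; rewrite size_cat /= expnS; lia. Qed.

Lemma zimin_nat_square_suffix j k : j <= k -> exists x, suffix (x ++ j :: x) (zimin_nat k).
Proof.
elim: k => [|k IHk]; first by rewrite leqn0 => /eqP->; exists [::].
rewrite leq_eqVlt => /orP[/eqP-> | /IHk[x sx]].
  by exists (zimin_nat k); apply: suffix_refl.
by exists x; rewrite /= -[_ ++ _ :: zimin_nat k]cat_rcons suffix_catr.
Qed.

Section ZiminImage.

Variables (T : eqType) (g : nat -> T).

Lemma map_zimin_nat_square_free k : {in [pred i | i <= k] &, injective g} ->
  free_from is_square (map g (zimin_nat k)).
Proof.
elim: k => [_ u /size_infix | k IHk g_inj].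
  move=> le_u [[|b x] [// _ def_u]].
  by move: le_u; rewrite def_u size_map /= size_cat /=; lia.
rewrite /= map_cat /=; apply: square_free_cat_fresh; last first.
  by apply: IHk; apply: sub_in2 g_inj => i /=; apply: leqW.
apply/mapP=> -[i /(allP (zimin_nat_le k)) /= le_ik /g_inj].
by rewrite !inE leqnn => /(_ isT (leqW le_ik)) eq_ik; rewrite -eq_ik ltnn in le_ik.
Qed.

Lemma map_zimin_nat_unfold (r : nat -> seq T) m : r 0 = [::] ->
    (forall k, k < m -> r k.+1 = r k ++ g k :: r k) ->
  forall k, k <= m -> r k ++ g k :: r k = map g (zimin_nat k).
Proof.
move=> r0 r_succ; elim=> [|k IHk] le_km; first by rewrite r0.
by rewrite r_succ // IHk 1?ltnW // /= map_cat.
Qed.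

End ZiminImage.

Lemma ziminE n : zimin n.+1 = map inord (zimin_nat n).
Proof.
rewrite /zimin /=; elim: (zimin_nat n) (zimin_nat_le n) => [//|i s IHs] /= /andP[le_in le_s].
rewrite -IHs //; case: insubP => [j _ def_j | ]; last by rewrite ltnS le_in.
by congr (_ :: _); apply: val_inj; rewrite /= def_j inordK.
Qed.

Lemma size_zimin n : (size (zimin n.+1)).+1 = 2 ^ n.+1.
Proof. by rewrite ziminE size_map size_zimin_nat. Qed.

Lemma zimin_crucial n : crucial is_square (zimin n.+1).
Proof.
apply/crucial_squareP; rewrite ziminE; split=> [|a].
  apply: map_zimin_nat_square_free => i j le_in le_jn.
  by move/(congr1 (@nat_of_ord _)); rewrite !inordK.
have [x /suffixP[p def_z]] := zimin_nat_square_suffix (ltn_ord a : a <= n).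
by exists (map inord x); apply/suffixP; exists (map inord p); rewrite def_z !map_cat /= inord_val.
Qed.

Definition rank_by (T : finType) (l : T -> nat) (a : T) := #|[set b | l b < l a]|.

Section Rank.

Variables (T : finType) (l : T -> nat).
Local Notation rank := (rank_by l).

Lemma ltn_rank a b : l a < l b -> rank a < rank b.
Proof.
move=> lt_ab; apply/proper_card/properP; split; last by exists a; rewrite !inE ?ltnn.
by apply/subsetP=> c; rewrite !inE => /ltn_trans; apply.
Qed.

Lemma leq_rank a b : (rank a <= rank b) = (l a <= l b).
Proof.
case: (leqP (l a) (l b)) => [le_ab | /ltn_rank lt_ba]; last by rewrite leqNgt lt_ba.
by apply/subset_leq_card/subsetP=> c; rewrite !inE => /leq_trans; apply.
Qed.

Lemma rank_lt_card a : rank a < #|T|.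
Proof.
rewrite -cardsT; apply/proper_card/properP; split; first exact: subsetT.
by exists a; rewrite ?inE ?ltnn.
Qed.

Hypothesis l_inj : injective l.

Lemma rank_inj : injective rank.
Proof. by move=> a b eq_ab; apply/l_inj/eqP; rewrite eqn_leq -!leq_rank eq_ab leqnn. Qed.

Lemma rank_pred a c : l a < l c ->
  exists b, [/\ l a <= l b, l b < l c & rank c = (rank b).+1].
Proof.
move=> lt_ac; have [b lt_bc max_b] := @arg_maxnP _ a (fun b => l b < l c) l lt_ac.
exists b; split=> //; first exact: max_b.
rewrite /rank_by (_ : [set d | l d < l c] = b |: [set d | l d < l b]).
  by rewrite cardsU1 inE ltnn.
apply/setP=> d; rewrite !inE; apply/idP/idP=> [lt_dc | /predU1P[-> // | /ltn_trans->//]].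
have : l d <= l b := max_b d lt_dc.
by rewrite leq_eqVlt => /orP[/eqP/l_inj-> | ->]; rewrite ?eqxx ?orbT.
Qed.

Hypothesis l_gap : forall a b, l a < l b -> 2 * l a < l b.

Lemma rank_doubling a c : rank a <= rank c -> (l a).+1 * 2 ^ (rank c - rank a) <= (l c).+1.
Proof.
have [N] := ubnP (l c); elim: N c => // N IHN c lt_cN.
rewrite leq_rank leq_eqVlt => /orP[/eqP/l_inj-> | lt_ac]; first by rewrite subnn muln1.
have [b [le_ab lt_bc ->]] := rank_pred lt_ac.
have le_rab : rank a <= rank b by rewrite leq_rank.
have := IHN b (leq_trans lt_bc lt_cN) le_rab; have := l_gap lt_bc.
by rewrite subSn // expnS; nia.
Qed.

End Rank.

Section MinimalCrucialSquareFree.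

Variables (n : nat) (W : seq 'I_n.+1).
Hypothesis W_min : minimal_crucial is_square W.

Let W_free : free_from is_square W := (proj1 (crucial_squareP W) W_min.1).1.
Let root_spec a : exists x, suffix (x ++ a :: x) W :=
  (proj1 (crucial_squareP W) W_min.1).2 a.
Let root a := xchoose (root_spec a).
Let len a := size (root a).

Let root_suffix a : suffix (root a ++ a :: root a) W := xchooseP (root_spec a).

Lemma len_inj : injective len.
Proof.
move=> a b eq_ab; have := suffix_size_inj (root_suffix a) (root_suffix b).
rewrite !size_cat /= -/(len a) -/(len b) eq_ab => /(_ erefl) /eqP.
by rewrite eqseq_cat // => /andP[_ /eqP[]].
Qed.

Lemma len_gap a b : len a < len b -> 2 * len a < len b.
Proof.
move=> lt_ab; rewrite ltnNge; apply/negP=> le_ba.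
by apply: overlapping_square_suffixes (root_suffix a) (root_suffix b) _ W_free; rewrite lt_ab.
Qed.

Lemma size_min_crucial : (size W).+1 <= 2 ^ n.+1.
Proof. by rewrite -size_zimin ltnS; apply: W_min.2; apply: zimin_crucial. Qed.

Lemma len_lt_size a : 2 * len a < size W.
Proof. by have := size_suffix (root_suffix a); rewrite size_cat /= -/(len a); lia. Qed.

Local Notation rank := (rank_by len).

Lemma rank_ltn a : rank a < n.+1.
Proof. by have := rank_lt_card len a; rewrite card_ord. Qed.

Let rank_ord a := Ordinal (rank_ltn a).

Lemma rank_ord_inj : injective rank_ord.
Proof. by move=> a b /(congr1 val) /rank_inj; apply; apply: len_inj. Qed.

Let sorted_letter := ((perm rank_ord_inj)^-1)%g.

Lemma rank_sorted_letter k : rank (sorted_letter k) = k.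
Proof. by have /(congr1 val) := permKV (perm rank_ord_inj) k; rewrite permE. Qed.

Lemma len_sorted_letter k : (len (sorted_letter k)).+1 = 2 ^ k.
Proof.
have rank_doubling_sorted (i j : 'I_n.+1) : i <= j ->
    (len (sorted_letter i)).+1 * 2 ^ (j - i) <= (len (sorted_letter j)).+1.
  have := rank_doubling len_inj len_gap (a := sorted_letter i) (c := sorted_letter j).
  by rewrite !rank_sorted_letter; apply.
apply/eqP; rewrite eqn_leq; apply/andP; split; last first.
  have := rank_doubling_sorted ord0 k (leq0n k); rewrite subn0; apply: leq_trans.
  by rewrite leq_pmull.
rewrite -(@leq_pmul2r (2 ^ (n - k))) ?expn_gt0 // -expnD subnKC ?leq_ord //.
apply: leq_trans (rank_doubling_sorted k ord_max (leq_ord k)) _.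
have := len_lt_size (sorted_letter ord_max); have := size_min_crucial.
rewrite expnS; lia.
Qed.

Let letter k := sorted_letter (inord k).

Lemma len_letter k : k <= n -> (len (letter k)).+1 = 2 ^ k.
Proof. by move=> le_kn; rewrite len_sorted_letter inordK. Qed.

Lemma root_letter0 : root (letter 0) = [::].
Proof. by apply/size0nil/eq_add_S; rewrite len_letter. Qed.

Lemma root_letter_succ k : k < n ->
  root (letter k.+1) = root (letter k) ++ letter k :: root (letter k).
Proof.
move=> lt_kn; apply: (suffix_size_inj (w := W)) (root_suffix (letter k)) _.
  by apply: suffix_trans (root_suffix (letter k.+1)); rewrite -cat_rcons suffix_suffix.
have := len_letter (ltnW lt_kn); have := len_letter lt_kn.
by rewrite /len size_cat /= expnS; lia.
Qed.

Lemma min_crucial_eq_root : W = root (letter n) ++ letter n :: root (letter n).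
Proof.
apply/esym/(suffix_size_inj (root_suffix _) (suffix_refl W)).
have := len_letter (leqnn n); have := len_lt_size (letter n); have := size_min_crucial.
by rewrite /len size_cat /= expnS; lia.
Qed.

Lemma min_crucial_zimin : exists s : {perm 'I_n.+1}, W = map s (zimin n.+1).
Proof.
exists sorted_letter; rewrite ziminE -map_comp min_crucial_eq_root.
exact: map_zimin_nat_unfold root_letter0 root_letter_succ _ (leqnn n).
Qed.

End MinimalCrucialSquareFree.

Theorem mainTheorem2 (n : nat) (hn : 0 < n) (W : seq 'I_n) :
  minimal_crucial is_square W ->
  exists s : {perm 'I_n}, W = map s (zimin n).
Proof. by case: n hn W => // n _ W /min_crucial_zimin. Qed.
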